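(* For every integer $n\ge2$, the coefficient of $u\,v^{n+1}w^{n-2}$ in $P_{n/(n+1)}(u,v,w)$ (i.e. the coefficient at the lattice point $(1,n+1)$ of the Newton polygon) equals $7n-10$.
   Context: Markov polynomials. Let $x,y,z$ be indeterminates. Consider the set consisting of all rationals $\rho\in[0,1]$, each written in lowest terms $\rho=a/b$ with integers $a\ge 0$, $b\ge 1$, together with the formal symbol $1/0$. Define Laurent polynomials $M_\rho(x,y,z)$ recursively by $M_{1/0}=y$, $M_{0/1}=x$, $M_{1/1}=\frac{x^2+y^2}{z}$, and: whenever $a/b$, $c/d$ are in this set with $|ad-bc|=1$ and $(a+2c)/(b+2d)\in[0,1]$, then $M_{\frac{a+2c}{b+2d}}=\big(M_{c/d}^2+M_{\frac{a+c}{b+d}}^2\big)/M_{a/b}$. This determines $M_\rho$ for every rational $\rho\in[0,1]$. Numerator. For coprime $1\le a\le b$, $P_{a/b}(u,v,w)$ denotes the homogeneous polynomial of degree $a+b-1$ such that $M_{a/b}(x,y,z)=P_{a/b}(x^2,y^2,z^2)/(x^{a-1}y^{b-1}z^{a+b-1})$; its existence is known. *)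

From HB Require Import structures.
From mathcomp Require Import all_boot all_order all_algebra.
From mathcomp Require Import fraction.
From mathcomp Require Import mpoly.
Set Implicit Arguments. Unset Strict Implicit. Unset Printing Implicit Defensive.
Import Order.TTheory GRing.Theory Num.Theory.
Local Open Scope ring_scope.

(* Polynomials in the variables x = 'X_0, y = 'X_1, z = 'X_2 with integer
   coefficients, and their field of fractions, which contains the Laurent
   polynomials in x, y, z. *)
Definition Poly3 := {mpoly int[3]}.
Definition RatFun := {fraction Poly3}.
Definition tof (p : Poly3) : RatFun := @FracField.tofrac Poly3 p.

Definition varx : RatFun := tof 'X_0.
Definition vary : RatFun := tof 'X_1.
Definition varz : RatFun := tof 'X_2.

(* A rational a/b in [0,1] in lowest terms (a >= 0, b >= 1), or the formal
   symbol 1/0, is encoded by the pair of naturals (a, b). *)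
Definition admissible (a b : nat) : bool :=
  ((a == 1%N) && (b == 0%N)) || ((0 < b)%N && (a <= b)%N && coprime a b).

Definition farey_neighbours (a b c d : nat) : bool :=
  (a * d == b * c + 1)%N || (b * c == a * d + 1)%N.

(* M : nat -> nat -> RatFun is a family of Markov polynomials, M a b standing
   for M_{a/b}: it satisfies the initial values and the recursive rule of the
   definition. *)
Definition is_markov_family (M : nat -> nat -> RatFun) : Prop :=
  [/\ M 1%N 0%N = vary,
      M 0%N 1%N = varx,
      M 1%N 1%N = (varx ^+ 2 + vary ^+ 2) / varz &
      forall a b c d : nat,
        admissible a b -> admissible c d -> farey_neighbours a b c d ->
        (a + 2 * c <= b + 2 * d)%N ->
        M (a + 2 * c)%N (b + 2 * d)%N
          = (M c d ^+ 2 + M (a + c)%N (b + d)%N ^+ 2) / M a b].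

Definition subst_squares (P : Poly3) : RatFun :=
  tof (P \mPo [tuple ('X_0 : Poly3) ^+ 2; ('X_1 : Poly3) ^+ 2; ('X_2 : Poly3) ^+ 2]).

Definition is_numerator (M : nat -> nat -> RatFun) (a b : nat) (P : Poly3) : Prop :=
  P \is ishomog1 (a + b - 1)%N mdeg /\
  M a b = subst_squares P / (varx ^+ (a - 1) * vary ^+ (b - 1) * varz ^+ (a + b - 1)).

(* Along the branch n/(n+1), the Markov rule
   M_{(n+2)/(n+3)} = (M_{1/1}^2 + M_{(n+1)/(n+2)}^2) / M_{n/(n+1)}
   is, by Cassini's identity, the linear recurrence M_{n+2} = t M_{n+1} - M_n.
   Clearing denominators, the numerators satisfy
   P_{k+2} = (vw + uw + (u+v)^2) P_{k+1} - u v w^2 P_k.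
   Setting v = 1, the coefficients A_k and B_k of u^0 and u^1 are polynomials in w
   satisfying a triangular recurrence, with closed forms A_{k+1} = (w+1)^k and
   B_{k+3} = 4(w+1)^{k+2} + (k+1)(3w+2)(w+1)^k; the coefficient of w^{k+1} in the
   latter is 4(k+2) + 3(k+1) = 7(k+3) - 10.  Homogeneity restores the power of v. *)

From HB Require Import structures.
From mathcomp Require Import all_boot all_order all_algebra.
From mathcomp Require Import fraction.
From mathcomp Require Import mpoly.
From mathcomp Require Import ring zify.
Set Implicit Arguments. Unset Strict Implicit. Unset Printing Implicit Defensive.
Import GRing.Theory.
Local Open Scope ring_scope.

Lemma coef_XaddC1_exp (R : nzRingType) n i : (('X + 1 : {poly R}) ^+ n)`_i = 'C(n, i)%:R.
Proof.
elim: n i => [|n IHn] i; first by rewrite expr0 coefC; case: i.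
rewrite exprSr mulrDr mulr1 coefD coefMX.
by case: i => [|i]; rewrite !IHn ?add0r ?bin0 // binS natrD addrC.
Qed.

Lemma coef1M (R : nzRingType) (p q : {poly R}) : (p * q)`_1 = p`_0 * q`_1 + p`_1 * q`_0.
Proof. by rewrite coefM !big_ord_recl big_ord0 addr0. Qed.

Section SquareSubstitution.
Variables (n : nat) (R : comNzRingType).

Definition sqr_vars : n.-tuple {mpoly R[n]} := [tuple 'X_i ^+ 2 | i < n].

Lemma comp_sqr_varsX (m : 'X_{1..n}) : 'X_[m] \mPo sqr_vars = 'X_[m + m].
Proof.
rewrite comp_mpolyX mpolyXD -expr2 [X in X ^+ 2]mpolyXE_id -prodrXl.
by apply: eq_bigr => i _; rewrite tnth_mktuple exprAC.
Qed.

Lemma mcoeff_comp_sqr_vars (p : {mpoly R[n]}) (m : 'X_{1..n}) :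
  (p \mPo sqr_vars)@_(m + m) = p@_m.
Proof.
rewrite comp_mpolyEX (raddf_sum (mcoeff (m + m))) [in RHS](mpolyE p) (raddf_sum (mcoeff m)).
apply: eq_bigr => m' _; rewrite comp_sqr_varsX /= !mcoeffZ !mcoeffX.
congr (_ * (nat_of_bool _)%:R); apply/eqP/eqP => [/mnmP eq_mm'|->] //.
by apply/mnmP => i; move: (eq_mm' i); rewrite !mnmDE; lia.
Qed.

Lemma comp_sqr_vars_inj : injective (comp_mpoly sqr_vars).
Proof.
move=> p q eq_pq; apply/mpolyP => m.
by rewrite -mcoeff_comp_sqr_vars eq_pq mcoeff_comp_sqr_vars.
Qed.

End SquareSubstitution.

Lemma cassini_invariant (R : comNzRingType) (t : R) (l : nat -> R) :
  (forall k, l k.+2 = t * l k.+1 - l k) ->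
  forall k, l k.+2 * l k - l k.+1 ^+ 2 = l 2 * l 0 - l 1 ^+ 2.
Proof. by move=> lSS; elim=> // k <-; rewrite (lSS k.+1) (lSS k); ring. Qed.

Section MarkovBranch.
Variables (F : fieldType) (x y z : F) (S : nat -> F).
Hypotheses (x_neq0 : x != 0) (y_neq0 : y != 0) (z_neq0 : z != 0).
Hypothesis S_neq0 : forall k, S k != 0.
Hypothesis S0 : S 0 = 1.
Hypothesis S1 : S 1 = x ^+ 2 * z ^+ 2 + (x ^+ 2 + y ^+ 2) ^+ 2.
Hypothesis S_rec :
  forall k, S k.+2 = (y ^+ 2 * z ^+ 2 + S 1) * S k.+1 - (x * y * z ^+ 2) ^+ 2 * S k.

Local Notation xyz2 := (x * y * z ^+ 2).
Local Notation tr := ((y ^+ 2 * z ^+ 2 + S 1) / xyz2).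
Local Notation K := ((x ^+ 2 + y ^+ 2) / z).

Lemma xyz2_neq0 : xyz2 != 0.
Proof. by rewrite !mulf_neq0 ?expf_neq0. Qed.

(* With S k = P_{k/(k+1)}(x^2, y^2, z^2), [branch k] is M_{k/(k+1)}; the form
   x S_k / (x y z^2)^k also covers k = 0, where the numerator formula does not apply. *)
Definition branch k := x * S k / xyz2 ^+ k.

Lemma branchSS k : branch k.+2 = tr * branch k.+1 - branch k.
Proof.
rewrite /branch S_rec !(exprS xyz2).
by field; rewrite expf_neq0 ?xyz2_neq0 ?x_neq0 ?y_neq0 ?z_neq0.
Qed.

Lemma branch0 : branch 0 = x.
Proof. by rewrite /branch S0 expr0 mulr1 divr1. Qed.

Lemma branch1 : branch 1 = (x ^+ 2 + K ^+ 2) / y.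
Proof. by rewrite /branch S1; field; rewrite x_neq0 y_neq0 z_neq0. Qed.

Lemma branch_cassini k : branch k.+2 * branch k - branch k.+1 ^+ 2 = K ^+ 2.
Proof.
rewrite (cassini_invariant branchSS) branchSS branch0 branch1 S1.
by field; rewrite x_neq0 y_neq0 z_neq0.
Qed.

Lemma branch_neq0 k : branch k != 0.
Proof. by rewrite !mulf_neq0 ?invr_neq0 ?expf_neq0 ?xyz2_neq0. Qed.

Lemma branch_den n : (0 < n)%N ->
  branch n = S n / (x ^+ (n - 1) * y ^+ (n.+1 - 1) * z ^+ (n + n.+1 - 1)).
Proof.
case: n => // m _; have -> : (m.+1 + m.+2 - 1 = 2 * m.+1)%N by lia.
rewrite !subSS !subn0 exprM /branch !exprMn exprS.
by field; rewrite !expf_neq0 ?x_neq0 ?y_neq0 ?z_neq0.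
Qed.

Lemma markov_branch (M : nat -> nat -> F) :
  M 1 0 = y -> M 0 1 = x -> M 1 1 = K ->
  (forall a b c d : nat,
     admissible a b -> admissible c d -> farey_neighbours a b c d ->
     (a + 2 * c <= b + 2 * d)%N ->
     M (a + 2 * c)%N (b + 2 * d)%N = (M c d ^+ 2 + M (a + c)%N (b + d)%N ^+ 2) / M a b) ->
  forall n, M n n.+1 = branch n.
Proof.
move=> M10 M01 M11 Mrec.
have M12 : M 1 2 = branch 1 by rewrite branch1 -M11 -M01 -M10; apply: (Mrec 1 0 0 1).
suff branch_pair n : M n n.+1 = branch n /\ M n.+1 n.+2 = branch n.+1.
  by move=> n; case: (branch_pair n).
elim: n => [|n [IHn IHSn]]; first by rewrite M01 branch0.
split=> //.
have adm : admissible n n.+1 by rewrite /admissible ltn0Sn leqnSn coprimenS orbT.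
have far : farey_neighbours n n.+1 1 1 by rewrite /farey_neighbours !muln1 !addn1 eqxx orbT.
have le_ab : (n + 2 * 1 <= n.+1 + 2 * 1)%N by lia.
move: (Mrec n n.+1 1 1 adm isT far le_ab).
rewrite !muln1 !addn2 !addn1 M11 IHn IHSn => ->.
by rewrite -(branch_cassini n); field; rewrite branch_neq0.
Qed.

End MarkovBranch.

Local Notation u := ('X_0 : Poly3).
Local Notation v := ('X_1 : Poly3).
Local Notation w := ('X_2 : Poly3).

Definition numerT : Poly3 := v * w + u * w + (u + v) ^+ 2.
Definition numerC : Poly3 := u * v * w ^+ 2.

Fixpoint numer (k : nat) : Poly3 :=
  match k with
  | 0 => 1
  | 1 => u * w + (u + v) ^+ 2
  | (k.+1 as k1).+1 => numerT * numer k1 - numerC * numer k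
  end.

Lemma numerSS k : numer k.+2 = numerT * numer k.+1 - numerC * numer k.
Proof. by []. Qed.

Lemma numer1 : numer 1 = u * w + (u + v) ^+ 2.
Proof. by []. Qed.

Arguments numer : simpl never.

Local Notation R2 := {poly {poly int}}.
Local Notation s := ('X : {poly int}).

Definition dehomog_var (i : 'I_3) : R2 := tnth [tuple 'X; 1; s%:P] i.
Definition dehomog : Poly3 -> R2 := mmap intr dehomog_var.
HB.instance Definition _ := GRing.RMorphism.copy dehomog (mmap intr dehomog_var).

Lemma dehomogX (i : 'I_3) : dehomog 'X_i = dehomog_var i.
Proof. by rewrite /dehomog mmapX mmap1U. Qed.

Lemma coef_dehomog_term (c : int) (m : 'X_{1..3}) i j :
  (c%:~R * mmap1 dehomog_var m)`_i`_j = c * ((m ord0 == i) && (m ord_max == j))%:R.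
Proof.
rewrite /mmap1 !big_ord_recl big_ord0 /dehomog_var !(tnth_nth 0) /= expr1n mul1r mulr1.
rewrite -polyC_exp mulrzl coefMrz coefMC coefXn coefMrz mulr_natl coefMn coefXn.
have -> : lift ord0 (lift ord0 ord0) = ord_max :> 'I_3 by apply: val_inj.
rewrite [(i == _)]eq_sym [(j == _)]eq_sym.
by case: (m ord0 == i); case: (m ord_max == j); rewrite ?mulr1n ?mulr0n ?mul0rz ?mulr0 ?mulr1 ?intz.
Qed.

Lemma coef_dehomog d i j p : (i + j <= d)%N -> p \is ishomog1 d mdeg ->
  (dehomog p)`_i`_j = p@_[multinom [tuple i; (d - i - j)%N; j]].
Proof.
move=> hijd /dhomogP homog_p.
rewrite /dehomog /mmap !coef_sum [in RHS](mpolyE p) (raddf_sum (mcoeff _)) !big_seq.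
apply: eq_bigr => m supp_m.
have : mdeg m = d := homog_p m supp_m.
rewrite mdegE !big_ord_recl big_ord0 addn0 /= => deg_m.
rewrite coef_dehomog_term mcoeffZ mcoeffX; congr (_ * (nat_of_bool _)%:R).
apply/idP/idP => [/andP[/eqP m0 /eqP m2]|/eqP->]; last by rewrite !mnm_tnth !(tnth_nth 0%N) /= !eqxx.
have {}m2 : m (lift ord0 (lift ord0 ord0)) = j by rewrite -m2; congr (m _); apply: val_inj.
apply/eqP/mnmP => -[[|[|[|k]]] hk] //; rewrite [in RHS]mnm_tnth (tnth_nth 0%N) /=.
- by rewrite -m0; congr (m _); apply: val_inj.
- have -> : Ordinal hk = lift ord0 ord0 by apply: val_inj.
  lia.
- by rewrite -m2; congr (m _); apply: val_inj.
Qed.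

Lemma dehomog_numerT : dehomog numerT = (s + 1)%:P + (s + 2%:R)%:P * 'X + 'X ^+ 2.
Proof.
rewrite /numerT !(rmorphD, rmorphM, rmorphXn) /= !dehomogX /dehomog_var !(tnth_nth 0) /=.
rewrite polyC1; ring.
Qed.

Lemma dehomog_numerC : dehomog numerC = (s ^+ 2)%:P * 'X.
Proof.
rewrite /numerC !(rmorphD, rmorphM, rmorphXn) /= !dehomogX /dehomog_var !(tnth_nth 0) /=.
ring.
Qed.

Lemma dehomog_numer1 : dehomog (numer 1) = 1 + (s + 2%:R)%:P * 'X + 'X ^+ 2.
Proof.
rewrite numer1 !(rmorphD, rmorphM, rmorphXn) /= !dehomogX /dehomog_var !(tnth_nth 0) /=.
rewrite polyC1; ring.
Qed.

Lemma dehomog_numerSS k :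
  dehomog (numer k.+2) = dehomog numerT * dehomog (numer k.+1) - dehomog numerC * dehomog (numer k).
Proof. by rewrite numerSS rmorphB 2!rmorphM. Qed.

Definition numerA k : {poly int} := (dehomog (numer k))`_0.
Definition numerB k : {poly int} := (dehomog (numer k))`_1.

Lemma numerA_closed k : numerA k = (s + 1) ^+ k.-1.
Proof.
elim: k => [|[|k] IHk]; rewrite /numerA.
- by rewrite rmorph1 coefC.
- by rewrite dehomog_numer1 !coefD coefC coefCM coefX coefXn /= mulr0 !addr0.
rewrite dehomog_numerSS dehomog_numerT dehomog_numerC coefB !coef0M -/(numerA k.+1) IHk !coefE /=.
by rewrite !mulr0 !addr0 !mul0r subr0 exprS.
Qed.

Lemma numer_neq0 k : numer k != 0.
Proof.
apply/eqP => numer0; have := congr1 (coefp 0) (numerA_closed k).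
rewrite /= coef_XaddC1_exp bin0 /numerA numer0 rmorph0 !coef0 => /eqP.
by rewrite eq_sym oner_eq0.
Qed.

Lemma numerB_rec k :
  numerB k.+2 = (s + 1) * numerB k.+1 + (s + 2%:R) * numerA k.+1 - s ^+ 2 * numerA k.
Proof.
rewrite /numerB dehomog_numerSS dehomog_numerT dehomog_numerC coefB !coef1M.
rewrite -/(numerB k.+1) -/(numerA k.+1) -/(numerB k) -/(numerA k) !coefE /=.
ring.
Qed.

Lemma numerB1 : numerB 1 = s + 2%:R.
Proof. by rewrite /numerB dehomog_numer1 !coefE /= add0r addr0 mulr1. Qed.

Lemma numerB2 : numerB 2 = (s + 1) *+ 4.
Proof. rewrite numerB_rec numerB1 !numerA_closed /=; ring. Qed.

Lemma numerB_closed k :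
  numerB k.+3 = (s + 1) ^+ k.+2 *+ 4 + (s *+ 3 + 2%:R) * (s + 1) ^+ k *+ k.+1.
Proof.
elim: k => [|k IHk]; rewrite numerB_rec !numerA_closed /=.
  by rewrite numerB2; ring.
rewrite IHk !exprS; ring.
Qed.

Lemma coef_numerB n : (2 <= n)%N -> (numerB n)`_(n - 2) = 7 * n%:Z - 10.
Proof.
case: n => [|[|[|k]]] // _.
  by rewrite numerB2 coefMn coefD coefX coefC.
rewrite numerB_closed subSS subn1 /= coefD !coefMn mulrDl (mulrnAl 'X) mulr_natl coefD !coefMn.
rewrite coefXM !coef_XaddC1_exp /= binSn binn bin_small //.
rewrite mul0rn addr0 -!mulrnA -natrD; lia.
Qed.

HB.instance Definition _ := GRing.RMorphism.copy subst_squares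
  (@tofrac Poly3 \o comp_mpoly [tuple ('X_0 : Poly3) ^+ 2; ('X_1 : Poly3) ^+ 2; ('X_2 : Poly3) ^+ 2]).

Lemma subst_squares_sqr_vars (p : Poly3) : subst_squares p = tof (p \mPo sqr_vars 3 int).
Proof.
congr (tof (_ \mPo _)); apply: eq_from_tnth => -[[|[|[|i]]] lt_i3] //;
  by rewrite tnth_mktuple (tnth_nth 0) /=; congr ('X_ _ ^+ 2); apply: val_inj.
Qed.

Lemma subst_squares_inj : injective subst_squares.
Proof.
move=> p q; rewrite !subst_squares_sqr_vars => /eqP; rewrite tofrac_eq.
by move/eqP/comp_sqr_vars_inj.
Qed.

Lemma subst_squaresX (i : 'I_3) : subst_squares 'X_i = tof 'X_i ^+ 2.
Proof. by rewrite subst_squares_sqr_vars comp_mpolyXU -tnth_nth tnth_mktuple /tof rmorphXn. Qed.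

Lemma tof_var_neq0 (i : 'I_3) : tof 'X_i != 0.
Proof.
rewrite tofrac_eq0; apply/eqP => /(congr1 (mcoeff U_(i))).
by rewrite mcoeffXU eqxx mcoeff0 => /eqP; rewrite oner_eq0.
Qed.

Lemma subst_squares_numer1 :
  subst_squares (numer 1) = varx ^+ 2 * varz ^+ 2 + (varx ^+ 2 + vary ^+ 2) ^+ 2.
Proof. by rewrite numer1 rmorphD rmorphM rmorphXn rmorphD /= !subst_squaresX. Qed.

Lemma subst_squares_numerSS k :
  subst_squares (numer k.+2) =
    (vary ^+ 2 * varz ^+ 2 + subst_squares (numer 1)) * subst_squares (numer k.+1)
    - (varx * vary * varz ^+ 2) ^+ 2 * subst_squares (numer k).
Proof.
rewrite numerSS rmorphB 2!rmorphM /= numer1 /numerT /numerC -addrA.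
congr (_ * _ - _ * _); first by rewrite rmorphD rmorphM /= !subst_squaresX.
by rewrite 2!rmorphM rmorphXn /= !subst_squaresX !exprMn.
Qed.

Lemma markov_numer M : is_markov_family M ->
  forall n, M n n.+1 = branch varx vary varz (fun k => subst_squares (numer k)) n.
Proof.
case=> M10 M01 M11 Mrec; apply: markov_branch => //; try exact: tof_var_neq0.
- by move=> k; rewrite raddf_eq0 ?numer_neq0 //; exact: subst_squares_inj.
- exact: rmorph1.
- exact: subst_squares_numer1.
- exact: subst_squares_numerSS.
Qed.

Lemma numerator_eq M n P : is_markov_family M -> (0 < n)%N ->
  is_numerator M n n.+1 P -> P = numer n.
Proof.
move=> markovM n_gt0 [_ M_nn1]; apply: subst_squares_inj.
have := markov_numer markovM n; rewrite M_nn1 branch_den //; try exact: tof_var_neq0.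
by apply: mulIf; rewrite invr_neq0 // !mulf_neq0 ?expf_neq0 ?tof_var_neq0.
Qed.

Theorem mainTheorem19 :
  forall M : nat -> nat -> RatFun, is_markov_family M ->
  forall n : nat, (2 <= n)%N ->
  forall P : Poly3, is_numerator M n n.+1 P ->
  P@_[multinom [tuple 1%N; n.+1; (n - 2)%N]] = (7 * n%:Z - 10)%R.
Proof.
move=> M markovM n n_ge2 P numP.
have le_deg : (1 + (n - 2) <= n + n.+1 - 1)%N by lia.
have := coef_dehomog le_deg numP.1.
rewrite (_ : (n + n.+1 - 1 - 1 - (n - 2) = n.+1)%N); last by lia.
rewrite (numerator_eq markovM _ numP); last by lia.
by move=> <-; exact: coef_numerB.
Qed.
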